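(* Let $\tilde A,\tilde B\in\mathbb{R}^{m\times n}$ and suppose there is $\gamma\in\mathbb{R}_{>0}$ with $\tilde C:=\tilde A+\gamma\tilde B=D+\hat{\mathbf{r}}\hat{\mathbf{c}}^\mathsf{T}$, where $D\in\mathcal{M}_{m\times n}(\mathbb{R})$, $\operatorname{rank}(D)<2$, $\operatorname{rank}(\tilde C)<3$, $\tilde C\notin\mathcal{M}_{m\times n}(\mathbb{R})$, $\hat{\mathbf{r}}\in\mathbb{R}^m$, $\hat{\mathbf{c}}\in\mathbb{R}^n$. Define $(\hat A,\hat B)$ as follows: (1) if $\operatorname{rank}(D)=0$: $\hat A=\tilde A$, $\hat B=\gamma\tilde B$; (2) if $\operatorname{rank}(D)=1$ and $\mathbf{1}_m\in\operatorname{span}(\tilde C)$: take any $\mathbf{x}_1$ with $\tilde C\mathbf{x}_1=\mathbf{1}_m$ and any $\mathbf{y}_1$ with $w_1=\mathbf{y}_1^\mathsf{T}\tilde C\mathbf{x}_1\ne0$, let $\hat{\mathbf{u}}^\mathsf{T}=w_1^{-1}\mathbf{y}_1^\mathsf{T}\tilde C$, and set $\hat A=\tilde A-\mathbf{1}_m\hat{\mathbf{u}}^\mathsf{T}$, $\hat B=\gamma\tilde B$; (3) if $\operatorname{rank}(D)=1$ and $\mathbf{1}_n\in\operatorname{span}(\tilde C^\mathsf{T})$: take any $\mathbf{y}_1$ with $\mathbf{y}_1^\mathsf{T}\tilde C=\mathbf{1}_n^\mathsf{T}$ and any $\mathbf{x}_1$ with $w_1=\mathbf{y}_1^\mathsf{T}\tilde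 C\mathbf{x}_1\ne0$, let $\hat{\mathbf{v}}=w_1^{-1}\tilde C\mathbf{x}_1$, and set $\hat A=\tilde A$, $\hat B=\gamma\tilde B-\hat{\mathbf{v}}\mathbf{1}_n^\mathsf{T}$. In each case the required vectors exist, $\operatorname{rank}(\hat A+\hat B)=1$, and $(m,n,\tilde A,\tilde B)$ is strategically equivalent to the rank-1 game $(m,n,\hat A,\hat B)$.
   Context: $\mathbf{1}_k$ is the all-ones vector of length $k$; $\operatorname{span}(C)$ is the column space of $C$. $\mathcal{M}_{m\times n}(\mathbb{R})=\{M\in\mathbb{R}^{m\times n}: M=\mathbf{1}_m\mathbf{u}^\mathsf{T}+\mathbf{v}\mathbf{1}_n^\mathsf{T}\text{ for some }\mathbf{u}\in\mathbb{R}^n,\mathbf{v}\in\mathbb{R}^m\}$. A bimatrix game $(m,n,A,B)$ has payoff matrices $A,B$; two games are strategically equivalent iff they have the same set of (mixed) Nash equilibria; a game is rank-1 if $\operatorname{rank}(A+B)=1$. *)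

From HB Require Import structures.
From mathcomp Require Import all_boot all_order all_algebra.
Set Implicit Arguments. Unset Strict Implicit. Unset Printing Implicit Defensive.
Import Order.TTheory GRing.Theory Num.Theory.
Local Open Scope ring_scope.

Definition ones (R : realFieldType) (k : nat) : 'cV[R]_k := const_mx 1.

Definition inM (R : realFieldType) (m n : nat) (M : 'M[R]_(m, n)) : Prop :=
  exists (u : 'cV[R]_n) (v : 'cV[R]_m), M = ones R m *m u^T + v *m (ones R n)^T.

Definition mixed (R : realFieldType) (k : nat) (p : 'cV[R]_k) : Prop :=
  (forall i, 0 <= p i 0) /\ \sum_i p i 0 = 1.

Definition payoff (R : realFieldType) (m n : nat) (x : 'cV[R]_m) (M : 'M[R]_(m, n))
  (y : 'cV[R]_n) : R := (x^T *m M *m y) 0 0.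

Definition nash (R : realFieldType) (m n : nat) (A B : 'M[R]_(m, n))
  (x : 'cV[R]_m) (y : 'cV[R]_n) : Prop :=
  [/\ mixed x, mixed y,
      (forall x' : 'cV[R]_m, mixed x' -> payoff x' A y <= payoff x A y) &
      (forall y' : 'cV[R]_n, mixed y' -> payoff x B y' <= payoff x B y)].

Definition strat_equiv (R : realFieldType) (m n : nat) (A B A' B' : 'M[R]_(m, n)) : Prop :=
  forall x y, nash A B x y <-> nash A' B' x y.

From HB Require Import structures.
From mathcomp Require Import all_boot all_order all_algebra.
From mathcomp Require Import zify ring.
Import Order.TTheory GRing.Theory Num.Theory.
Set Implicit Arguments. Unset Strict Implicit.
Local Open Scope ring_scope.

(* A Nash equilibrium only compares a player's payoffs
   against a fixed opponent strategy, so it is preserved when, for every fixed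
   opponent strategy, the payoff function is replaced by a positive affine
   transform of itself on the mixed strategies.  Scaling B by gamma > 0,
   subtracting 1_m u^T from A, or subtracting v 1_n^T from B are such transforms
   (a mixed strategy sums to 1), so all three constructed games are equivalent
   to the original one.

   In every case A^ + B^ is obtained from C = A~ + gamma B~ by the
   Wedderburn deflation  C - w^-1 (C x)(y^T C)  with  w = y^T C x <> 0,  which
   kills the nonzero vector C x and hence lowers the rank; as rank C < 3 and the
   deflated matrix is nonzero (otherwise C would lie in M), its rank is 1.  In
   case (1) C = r c^T is nonzero and of rank at most 1. *)

Section PositiveAffine.
Variables (R : realFieldType) (S T : Type) (Q : T -> Prop).

Definition pos_affine (F F' : S -> T -> R) : Prop :=
  forall s, exists a b, 0 < a /\ forall t, Q t -> F' s t = a * F s t + b.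

Lemma pos_affine_refl (F : S -> T -> R) : pos_affine F F.
Proof. by move=> s; exists 1, 0; split => // t _; rewrite mul1r addr0. Qed.

Lemma pos_affine_sym (F F' : S -> T -> R) : pos_affine F F' -> pos_affine F' F.
Proof.
move=> hF s; have [a [b [a_gt0 eF]]] := hF s.
exists a^-1, (- (b / a)); split; first by rewrite invr_gt0.
by move=> t Qt; rewrite eF //; field; rewrite lt0r_neq0.
Qed.

Lemma pos_affine_trans (F G H : S -> T -> R) :
  pos_affine F G -> pos_affine G H -> pos_affine F H.
Proof.
move=> hFG hGH s.
have [a1 [b1 [a1_gt0 e1]]] := hFG s; have [a2 [b2 [a2_gt0 e2]]] := hGH s.
exists (a2 * a1), (a2 * b1 + b2); split; first exact: mulr_gt0.
by move=> t Qt; rewrite e2 // e1 //; ring.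
Qed.

Lemma pos_affine_best (F F' : S -> T -> R) s t :
  pos_affine F F' -> Q t -> (forall t', Q t' -> F s t' <= F s t) ->
  forall t', Q t' -> F' s t' <= F' s t.
Proof.
move=> hF Qt best t' Qt'; have [a [b [a_gt0 eF]]] := hF s.
by rewrite !eF // lerD2r ler_pM2l // best.
Qed.

End PositiveAffine.

Section Games.
Variables (R : realFieldType) (m n : nat).
Implicit Types (A B : 'M[R]_(m, n)) (x : 'cV[R]_m) (y : 'cV[R]_n).

Definition row_payoffs A : 'cV[R]_n -> 'cV[R]_m -> R := fun y x => payoff x A y.
Definition col_payoffs B : 'cV[R]_m -> 'cV[R]_n -> R := fun x y => payoff x B y.

Lemma nash_pos_affine A B A' B' x y :
  pos_affine (@mixed R m) (row_payoffs A) (row_payoffs A') ->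
  pos_affine (@mixed R n) (col_payoffs B) (col_payoffs B') ->
  nash A B x y -> nash A' B' x y.
Proof.
move=> hA hB [mx my bestx besty]; split => //.
- exact: (pos_affine_best hA mx bestx).
- exact: (pos_affine_best hB my besty).
Qed.

Lemma strat_equiv_pos_affine A B A' B' :
  pos_affine (@mixed R m) (row_payoffs A) (row_payoffs A') ->
  pos_affine (@mixed R n) (col_payoffs B) (col_payoffs B') ->
  strat_equiv A B A' B'.
Proof.
move=> hA hB x y; split; first exact: nash_pos_affine.
by apply: nash_pos_affine; apply: pos_affine_sym.
Qed.

Lemma mixed_onesL k (p : 'cV[R]_k) : mixed p -> p^T *m ones R k = 1%:M.
Proof.
move=> [_ sum1]; apply/matrixP => i j; rewrite !ord1 !mxE /= -sum1.
by apply: eq_bigr => l _; rewrite !mxE mulr1.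
Qed.

Lemma mixed_onesR k (p : 'cV[R]_k) : mixed p -> (ones R k)^T *m p = 1%:M.
Proof. by move=> mp; apply: trmx_inj; rewrite trmx_mul trmxK mixed_onesL // trmx1. Qed.

Lemma pos_affine_scale B g : 0 < g ->
  pos_affine (@mixed R n) (col_payoffs B) (col_payoffs (g *: B)).
Proof.
move=> g_gt0 x; exists g, 0; split => // y _.
by rewrite /col_payoffs /payoff -scalemxAr -scalemxAl mxE addr0.
Qed.

Lemma pos_affine_shift_row A (u : 'rV[R]_n) :
  pos_affine (@mixed R m) (row_payoffs A) (row_payoffs (A - ones R m *m u)).
Proof.
move=> y; exists 1, (- (u *m y) 0 0); split => // x mx.
by rewrite mul1r /row_payoffs /payoff mulmxBr mulmxBl mulmxA mixed_onesL // mul1mx !mxE.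
Qed.

Lemma pos_affine_shift_col B (v : 'cV[R]_m) :
  pos_affine (@mixed R n) (col_payoffs B) (col_payoffs (B - v *m (ones R n)^T)).
Proof.
move=> x; exists 1, (- (x^T *m v) 0 0); split => // y my.
rewrite mul1r /col_payoffs /payoff mulmxBr mulmxBl mulmxA.
by rewrite -(mulmxA (x^T *m v)) mixed_onesR // mulmx1 !mxE.
Qed.

End Games.

Lemma mxrank_mul_lt (F : fieldType) (m n : nat) (P : 'M[F]_m) (C : 'M[F]_(m, n))
  (x : 'cV[F]_n) : P *m C *m x = 0 -> C *m x != 0 -> (\rank (P *m C) < \rank C)%N.
Proof.
move=> PCx0 Cx_neq0; apply: rank_ltmx; rewrite ltmxE submxMl /=.
apply/negP => /submxP [K defC]; move: Cx_neq0.
by rewrite defC -mulmxA PCx0 mulmx0 eqxx.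
Qed.

Lemma mxrank_deflate (F : fieldType) (m n : nat) (C : 'M[F]_(m, n))
  (x : 'cV[F]_n) (y : 'cV[F]_m) :
  let w := (y^T *m C *m x) 0 0 in w != 0 ->
  (\rank (C - w^-1 *: (C *m x *m (y^T *m C)))%R < \rank C)%N.
Proof.
move=> w w_neq0; set P := 1%:M - w^-1 *: (C *m x *m y^T).
have -> : C - w^-1 *: (C *m x *m (y^T *m C)) = P *m C.
  by rewrite mulmxBl mul1mx -scalemxAl !mulmxA.
have yCx : y^T *m (C *m x) = w%:M by rewrite mulmxA -mx11_scalar.
apply: (mxrank_mul_lt (x := x)).
  rewrite -mulmxA mulmxBl mul1mx -scalemxAl -(mulmxA (C *m x)) yCx mul_mx_scalar scalerA.
  by rewrite mulVf // scale1r subrr.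
apply: contra w_neq0 => /eqP Cx0.
by rewrite /w -mulmxA Cx0 mulmx0 mxE.
Qed.

Lemma rank1_below (F : fieldType) (m n : nat) (C C' : 'M[F]_(m, n)) :
  (\rank C < 3)%N -> (\rank C' < \rank C)%N -> C' != 0 -> \rank C' = 1%N.
Proof. by rewrite -mxrank_eq0 => *; lia. Qed.

Section OnesAndM.
Variables (R : realFieldType) (m n : nat).

Lemma inM_row (u : 'cV[R]_n) : inM (ones R m *m u^T).
Proof. by exists u, 0; rewrite mul0mx addr0. Qed.

Lemma inM_col (v : 'cV[R]_m) : inM (v *m (ones R n)^T).
Proof. by exists 0, v; rewrite trmx0 mulmx0 add0r. Qed.

Lemma notinM_dims (C : 'M[R]_(m, n)) : ~ inM C -> (0 < m)%N /\ (0 < n)%N.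
Proof.
have M0 : inM (0 : 'M[R]_(m, n)) by rewrite -(mul0mx _ (ones R n)^T); exact: inM_col.
case: m n C M0 => [|m'] [|n'] C M0 notM //; exfalso; apply: notM.
- by rewrite flatmx0.
- by rewrite flatmx0.
- by rewrite thinmx0.
Qed.

(* 1_k is nonzero and 1_k^T 1_k = k; over an ordered field this witnesses
   w1 <> 0 in the existence parts of cases (2) and (3). *)
Lemma ones_neq0 k : (0 < k)%N -> ones R k != 0.
Proof.
move=> k_gt0; apply/eqP => /matrixP /(_ (Ordinal k_gt0) 0).
by rewrite !mxE => /eqP; rewrite oner_eq0.
Qed.

Lemma ones_dot k : ((ones R k)^T *m ones R k) 0 0 = k%:R.
Proof.
rewrite !mxE (eq_bigr (fun _ => 1)) ?sumr_const ?card_ord // => i _.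
by rewrite !mxE mulr1.
Qed.

End OnesAndM.

Theorem mainTheorem12 (R : realFieldType) (m n : nat)
  (At Bt : 'M[R]_(m, n)) (gamma : R) (C D : 'M[R]_(m, n))
  (rh : 'cV[R]_m) (ch : 'cV[R]_n)
  (hgamma : 0 < gamma)
  (hC : C = At + gamma *: Bt)
  (hCD : C = D + rh *m ch^T)
  (hDM : inM D) (hDr : (\rank D < 2)%N) (hCr : (\rank C < 3)%N)
  (hCM : ~ inM C) :
  (* case (1) *)
  ((\rank D = 0)%N ->
     \rank (At + gamma *: Bt)%R = 1%N /\ strat_equiv At Bt At (gamma *: Bt))
  /\
  (* case (2): 1_m in the column space of C *)
  ((\rank D = 1)%N -> ((ones R m)^T <= C^T)%MS ->
     (exists x1 : 'cV[R]_n, C *m x1 = ones R m) /\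
     (forall x1 : 'cV[R]_n, C *m x1 = ones R m ->
        exists y1 : 'cV[R]_m, (y1^T *m C *m x1) 0 0 != 0) /\
     (forall (x1 : 'cV[R]_n) (y1 : 'cV[R]_m), C *m x1 = ones R m ->
        let w1 := (y1^T *m C *m x1) 0 0 in w1 != 0 ->
        let uh : 'rV[R]_n := w1^-1 *: (y1^T *m C) in
        let Ah := At - ones R m *m uh in
        let Bh := gamma *: Bt in
        \rank (Ah + Bh)%R = 1%N /\ strat_equiv At Bt Ah Bh))
  /\
  (* case (3): 1_n in the column space of C^T *)
  ((\rank D = 1)%N -> ((ones R n)^T <= C)%MS ->
     (exists y1 : 'cV[R]_m, y1^T *m C = (ones R n)^T) /\
     (forall y1 : 'cV[R]_m, y1^T *m C = (ones R n)^T ->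
        exists x1 : 'cV[R]_n, (y1^T *m C *m x1) 0 0 != 0) /\
     (forall (x1 : 'cV[R]_n) (y1 : 'cV[R]_m), y1^T *m C = (ones R n)^T ->
        let w1 := (y1^T *m C *m x1) 0 0 in w1 != 0 ->
        let vh : 'cV[R]_m := w1^-1 *: (C *m x1) in
        let Ah := At in
        let Bh := gamma *: Bt - vh *m (ones R n)^T in
        \rank (Ah + Bh)%R = 1%N /\ strat_equiv At Bt Ah Bh)).
Proof.
have [m_gt0 n_gt0] := notinM_dims hCM.
have C_neq0 (E : 'M[R]_(m, n)) : inM E -> C != E.
  by move=> ME; apply: contraPneq hCM => ->.
split; [|split].
- move=> /eqP; rewrite mxrank_eq0 => /eqP D0; rewrite -hC; split.
    have C_le1 : (\rank C <= 1)%N.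
      by rewrite hCD D0 add0r (leq_trans (mxrankM_maxl _ _)) ?rank_leq_col.
    have : C != 0 by apply: C_neq0; rewrite -(mul0mx _ (ones R n)^T); exact: inM_col.
    by rewrite -mxrank_eq0; lia.
  exact: strat_equiv_pos_affine (pos_affine_refl _ _) (pos_affine_scale _ hgamma).
- move=> _ /submxP [K defK]; split.
    by exists K^T; apply: trmx_inj; rewrite trmx_mul trmxK.
  split=> [x1 Cx1|x1 y1 Cx1 w1 w1_neq0 uh Ah Bh].
    by exists (ones R m); rewrite -mulmxA Cx1 ones_dot pnatr_eq0 -lt0n.
  have defCh : Ah + Bh = C - w1^-1 *: (C *m x1 *m (y1^T *m C)).
    by rewrite /Ah /Bh /uh Cx1 -scalemxAr hC addrAC.
  split; last exact: strat_equiv_pos_affine (pos_affine_shift_row _ _)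
                                            (pos_affine_scale _ hgamma).
  apply: (rank1_below hCr); first by rewrite defCh mxrank_deflate.
  by rewrite /Ah /Bh addrAC -hC subr_eq0 C_neq0 // -[uh]trmxK; apply: inM_row.
- move=> _ /submxP [K defK]; split; first by exists K^T; rewrite trmxK.
  split=> [y1 y1C|x1 y1 y1C w1 w1_neq0 vh Ah Bh].
    by exists (ones R n); rewrite y1C ones_dot pnatr_eq0 -lt0n.
  have defCh : Ah + Bh = C - w1^-1 *: (C *m x1 *m (y1^T *m C)).
    by rewrite /Ah /Bh /vh y1C -scalemxAl hC addrA.
  split.
    apply: (rank1_below hCr); first by rewrite defCh mxrank_deflate.
    by rewrite /Ah /Bh addrA -hC subr_eq0 C_neq0 //; apply: inM_col.
  apply: strat_equiv_pos_affine (pos_affine_refl _ _) _.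
  exact: pos_affine_trans (pos_affine_scale _ hgamma) (pos_affine_shift_col _ _).
Qed.
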